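(* Let $(L,\wedge,\vee,0,1)$ be a bounded lattice and for $x,y\in L$ set $x\boxdot y:=\{z\in L\mid x\wedge y=x\wedge z=z\wedge y\}$. Then $(L,\boxdot,1)$ is a commutative, total and reproductive mosaic, in which the inverse of each $x\in L$ is $x$ itself. Moreover, $0$ is the unique element $z\in L$ such that for all $x\in L$: $z\in x\boxdot x$ implies $x=z$.
   Context: A multioperation on a set $A$ is a function $\boxdot:A\times A\to\wp(A)$; for $x\in A$ and $Y\subseteq A$, $x\boxdot Y:=\bigcup_{y\in Y}x\boxdot y$. It is total if $x\boxdot y\ne\emptyset$ for all $x,y$; commutative if $x\boxdot y=y\boxdot x$; reproductive if $x\boxdot A=A$ for all $x\in A$. A neutral element $e$ satisfies $e\boxdot x=x\boxdot e=\{x\}$ for all $x$. For an endofunction $\rho$, $\rho$-reversibility means: $z\in x\boxdot y$ implies $x\in z\boxdot\rho(y)$ and $y\in\rho(x)\boxdot z$. A mosaic $(A,\boxdot,e)$ is a set with a multioperation with neutral element $e$ that is $\rho$-reversible for some endofunction $\rho$. An inverse of $x$ is an element $y$ with $e\in(x\boxdot y)\cap(y\boxdot x)$. *)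

From HB Require Import structures.
From mathcomp Require Import all_boot all_order.
Set Implicit Arguments. Unset Strict Implicit. Unset Printing Implicit Defensive.
Import Order.TTheory.
Local Open Scope order_scope.

(* A multioperation on A: mop x y is the subset x ⊡ y of A, as a predicate;
   z ∈ x ⊡ y is written  mop x y z. *)
Definition multiop (A : Type) := A -> A -> A -> Prop.

Definition mop_total A (m : multiop A) := forall x y, exists z, m x y z.
Definition mop_commutative A (m : multiop A) :=
  forall x y z, m x y z <-> m y x z.
(* x ⊡ A = A, where x ⊡ A = \bigcup_{y} x ⊡ y (the inclusion ⊆ is trivial) *)
Definition mop_reproductive A (m : multiop A) :=
  forall x w, (exists y, m x y w) <-> True.
Definition mop_neutral A (m : multiop A) (e : A) :=
  forall x z, (m e x z <-> z = x) /\ (m x e z <-> z = x).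
Definition mop_reversible A (m : multiop A) (rho : A -> A) :=
  forall x y z, m x y z -> m z (rho y) x /\ m (rho x) z y.
Definition mosaic A (m : multiop A) (e : A) :=
  mop_neutral m e /\ exists rho : A -> A, mop_reversible m rho.
Definition mop_inverse A (m : multiop A) (e x y : A) :=
  m x y e /\ m y x e.

Definition lat_box d (L : latticeType d) : multiop L :=
  fun x y z => x `&` y = x `&` z /\ x `&` z = z `&` y.

From mathcomp Require Import all_boot all_order.
Set Implicit Arguments. Unset Strict Implicit. Unset Printing Implicit Defensive.
Import Order.TTheory.
Local Open Scope order_scope.

(* z ∈ x ⊡ y says that the three pairwise meets of x, y, z coincide, a
   condition invariant under all permutations of (x, y, z); this gives
   commutativity and reversibility with ρ = id.  Moreover x ⊡ y ∋ x ∧ y,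
   x ⊡ 1 = {x}, 1 ∈ x ⊡ y iff x = y, and x ⊡ x is the up-set of x, whose
   least element is 0 only when x = 0; so 0 is the only z lying in no
   diagonal x ⊡ x with x ≠ z. *)

Section LatticeBox.
Variables (d : Order.disp_t) (L : latticeType d).
Implicit Types x y z : L.

Lemma lat_boxC x y z : lat_box x y z -> lat_box y x z.
Proof.
move=> [exy exz]; split; first by rewrite meetC exy exz meetC.
by rewrite [z `&` x]meetC exz meetC.
Qed.

Lemma lat_box_rev x y z : lat_box x y z -> lat_box z y x.
Proof.
move=> [exy exz]; split; first by rewrite -exz meetC.
by rewrite meetC exy.
Qed.

Lemma lat_boxCr x y z : lat_box x y z -> lat_box x z y.
Proof. by move=> /lat_boxC /lat_box_rev /lat_boxC. Qed.

Lemma lat_box_commutative : mop_commutative (@lat_box d L).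
Proof. by move=> x y z; split; apply: lat_boxC. Qed.

Lemma lat_box_reversible : mop_reversible (@lat_box d L) id.
Proof. by move=> x y z xyz; split; [apply: lat_box_rev | apply: lat_boxCr]. Qed.

Lemma lat_box_meet x y : lat_box x y (x `&` y).
Proof. by split; rewrite meetKI // -meetA meetxx. Qed.

Lemma lat_box_total : mop_total (@lat_box d L).
Proof. by move=> x y; exists (x `&` y); apply: lat_box_meet. Qed.

Lemma lat_box_reproductive : mop_reproductive (@lat_box d L).
Proof. by move=> x w; split=> // _; exists (x `&` w); apply/lat_boxCr/lat_box_meet. Qed.

Lemma lat_box_diagE x z : lat_box x x z <-> x <= z.
Proof.
rewrite /lat_box leEmeet meetxx [z `&` x]meetC.
by split=> [[<-] | /eqP ->].
Qed.

End LatticeBox.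

Section TopBox.
Variables (d : Order.disp_t) (L : tLatticeType d).
Implicit Types x y z : L.

Lemma lat_box1x x z : lat_box \top x z <-> z = x.
Proof. by rewrite /lat_box !meet1x; split=> [[->] | ->]; rewrite ?meetxx. Qed.

Lemma lat_box_neutral : mop_neutral (@lat_box d L) \top.
Proof.
move=> x z; split; first exact: lat_box1x.
by split=> [/lat_boxC /lat_box1x | /lat_box1x /lat_boxC].
Qed.

Lemma lat_box_mosaic : mosaic (@lat_box d L) \top.
Proof. by split; [apply: lat_box_neutral | exists id; apply: lat_box_reversible]. Qed.

Lemma lat_box_top x y : lat_box x y \top <-> y = x.
Proof.
split; last by move=> ->; apply/lat_box_diagE/lex1.
by move=> /lat_box_rev /lat_box1x ->.
Qed.

Lemma lat_box_inverseE x y : mop_inverse (@lat_box d L) \top x y <-> y = x.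
Proof.
split; first by move=> [/lat_box_top].
by move=> yx; split; apply/lat_box_top.
Qed.

End TopBox.

Section BottomBox.
Variables (d : Order.disp_t) (L : bLatticeType d).
Implicit Types x z : L.

Lemma lat_box_diag0 x : lat_box x x \bot -> x = \bot.
Proof. by move=> /lat_box_diagE; rewrite lex0 => /eqP. Qed.

Lemma lat_box_diag_fix0 z : (forall x, lat_box x x z -> x = z) -> z = \bot.
Proof. by move=> fix_z; symmetry; apply/fix_z/lat_box_diagE/le0x. Qed.

End BottomBox.

Theorem mainTheorem5 (d : Order.disp_t) (L : tbLatticeType d) :
  mosaic (@lat_box d L) \top /\
  mop_commutative (@lat_box d L) /\
  mop_total (@lat_box d L) /\
  mop_reproductive (@lat_box d L) /\
  (forall x : L, mop_inverse (@lat_box d L) \top x x /\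
     (forall y : L, mop_inverse (@lat_box d L) \top x y -> y = x)) /\
  (forall x : L, lat_box x x \bot -> x = \bot) /\
  (forall z : L, (forall x : L, lat_box x x z -> x = z) -> z = \bot).
Proof.
split; first exact: lat_box_mosaic.
split; first exact: lat_box_commutative.
split; first exact: lat_box_total.
split; first exact: lat_box_reproductive.
split; first by move=> x; split=> [|y /lat_box_inverseE //]; exact/lat_box_inverseE.
split; [exact: lat_box_diag0 | exact: lat_box_diag_fix0].
Qed.
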